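(* Consider an irreducible Markov chain on $n$ states whose transition probabilities are rational numbers whose denominators all divide a positive integer $M$. Let $k\le n$ be the number of states having at least two possible successors (i.e. at least two states reachable in one step with positive probability). Let $\pi\in(0,1]^n$ be the invariant probability measure of the chain. Then the least common denominator of the rational numbers $\pi_1,\dots,\pi_n$ is at most $n M^{\min\{k,n-1\}}$. *)

From HB Require Import structures.
From mathcomp Require Import all_boot all_order all_algebra.
Set Implicit Arguments. Unset Strict Implicit. Unset Printing Implicit Defensive.
Import Order.TTheory GRing.Theory Num.Theory.
Local Open Scope ring_scope.

Definition stochastic (n : nat) (P : 'M[rat]_n) : Prop :=
  (forall i j, 0 <= P i j) /\ (forall i, \sum_(j < n) P i j = 1).

Definition trans_rel (n : nat) (P : 'M[rat]_n) : rel 'I_n :=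
  fun i j => 0 < P i j.

Definition irreducible (n : nat) (P : 'M[rat]_n) : Prop :=
  forall i j, connect (trans_rel P) i j.

Definition denoms_divide (n : nat) (P : 'M[rat]_n) (M : nat) : Prop :=
  forall i j, (absz (denq (P i j)) %| M)%N.

Definition branching_states (n : nat) (P : 'M[rat]_n) : nat :=
  #|[set i : 'I_n | (1 < #|[set j : 'I_n | (0 < P i j)%R]|)%N]|.

Definition invariant_prob (n : nat) (P : 'M[rat]_n) (pi : 'rV[rat]_n) : Prop :=
  (forall i, 0 <= pi 0 i) /\ \sum_(i < n) pi 0 i = 1 /\ pi *m P = pi.

Definition lcd (n : nat) (v : 'rV[rat]_n) : nat :=
  \big[lcmn/1%N]_(i < n) absz (denq (v 0 i)).

(* Markov chain tree theorem: for an irreducible stochastic matrix P the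
   invariant probability is proportional to w_r, the sum over the spanning
   arborescences f rooted at r (every vertex reaches r along f) of the product
   of the P u (f u) with u <> r.  A non-branching state contributes a factor 1,
   so each such product times M ^ k is an integer, where k is the number of
   branching states other than r, and k <= min (#branching, n - 1).  Hence
   M ^ k * sum_r w_r is a common denominator of the invariant probability, and
   it is at most n M ^ k because each w_r <= 1. *)

From HB Require Import structures.
From mathcomp Require Import all_boot all_order all_algebra zify.
Import Order.TTheory GRing.Theory Num.Theory.
Set Implicit Arguments. Unset Strict Implicit. Unset Printing Implicit Defensive.

Section FunctionalGraphs.
Variable T : finType.
Implicit Types (f g : {ffun T -> T}) (a b i j r u : T).

Definition redirect g a b : {ffun T -> T} :=
  [ffun x => if x == a then b else g x].

Lemma redirect_at g a b : redirect g a b a = b.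
Proof. by rewrite ffunE eqxx. Qed.

Lemma redirect_out g a b x : x != a -> redirect g a b x = g x.
Proof. by rewrite ffunE => /negPf ->. Qed.

Lemma redirectK g a b c : redirect (redirect g a b) a c = redirect g a c.
Proof. by apply/ffunP => x; rewrite !ffunE; case: eqP. Qed.

Lemma redirect_id g a : redirect g a (g a) = g.
Proof. by apply/ffunP => x; rewrite !ffunE; case: eqP => // ->. Qed.

Lemma fconnect_iterP (h : T -> T) u v :
  reflect (exists t, iter t h u = v) (fconnect h u v).
Proof.
apply: (iffP idP) => [uv|[t <-]]; last exact: fconnect_iter.
by exists (findex h u v); apply: iter_findex.
Qed.

Lemma iter_agree (h h' : T -> T) a u t :
  (forall x, x != a -> h' x = h x) -> (forall s, s < t -> iter s h u != a) ->
  iter t h' u = iter t h u.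
Proof.
move=> hh'; elim: t => [//|t IHt] avoid /=.
by rewrite IHt => [|s /ltnW]; [apply/hh'/avoid | apply: avoid].
Qed.

(* The first visit of [a] does not look at the edge out of [a]. *)
Lemma fconnect_agree (h h' : T -> T) a u :
  (forall x, x != a -> h' x = h x) -> fconnect h u a -> fconnect h' u a.
Proof.
move=> hh' /fconnect_iterP [t0 /eqP t0a]; apply/fconnect_iterP.
have [t /eqP ta t_min] := @ex_minnP (fun t => iter t h u == a) (ex_intro _ t0 t0a).
exists t; rewrite (iter_agree hh') // => s lt_st.
by apply: contraTneq lt_st => sa; rewrite -leqNgt t_min ?sa.
Qed.

Lemma fconnect_redirect g a b u : fconnect (redirect g a b) u a = fconnect g u a.
Proof.
by apply/idP/idP; apply: fconnect_agree => x xa; rewrite redirect_out.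
Qed.

Definition arborescence r f : bool := (f r == r) && [forall u, fconnect f u r].

Definition all_reach j g : bool := [forall u, fconnect g u j].

Lemma all_reach_arborescence j g : all_reach j g = arborescence j (redirect g j j).
Proof.
rewrite /arborescence redirect_at eqxx; apply: eq_forallb => u.
by rewrite fconnect_redirect.
Qed.

Lemma arborescence_redirect_root r f :
  arborescence r f = arborescence r (redirect f r r) && (redirect f r r == f).
Proof.
have [fr | fNr] := eqVneq (f r) r.
  have -> : redirect f r r = f by rewrite -{2}fr redirect_id.
  by rewrite eqxx andbT.
rewrite /arborescence (negPf fNr) /=; symmetry; apply/negbTE/andP => -[_ /eqP E].
by move: fNr; rewrite -E redirect_at eqxx.
Qed.

Lemma fcycle_pred_unique g j i1 i2 :
  g i1 = j -> g i2 = j -> fconnect g j i1 -> fconnect g j i2 -> i1 = i2.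
Proof.
wlog le_t12 : i1 i2 / findex g j i1 <= findex g j i2.
  by move=> wlog_le; case: (leqP (findex g j i1) (findex g j i2)) => [|/ltnW] le;
    [apply: wlog_le | move=> *; symmetry; apply: wlog_le].
move=> gi1 gi2 ji1 ji2; rewrite -(iter_findex ji1) -(iter_findex ji2).
set t1 := findex g j i1; set t2 := findex g j i2.
case: ltngtP le_t12 => // [lt_t12 _ | eq_t12 _]; last by rewrite /t1 eq_t12.
have back_to_j : iter t1.+1 g j = j by rewrite iterS iter_findex.
have i2_early : iter (t2 - t1.+1) g j = i2.
  by rewrite -[RHS](iter_findex ji2) -[in RHS](subnK lt_t12) iterD back_to_j.
have := findex_iter (leq_ltn_trans (leq_subr t1.+1 t2) (findex_max ji2)).
by rewrite i2_early -/t2; lia.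
Qed.

(* If every vertex reaches [j], then [j] lies on a cycle of [g] and the only
   such predecessor is the one preceding [j] on that cycle. *)
Lemma card_reached_pred g j :
  #|[pred i | (g i == j) && all_reach i g]| = all_reach j g.
Proof.
have [/forallP reach_j | Nreach_j] := boolP (all_reach j g); last first.
  apply: eq_card0 => i; rewrite !inE; apply: contraNF Nreach_j.
  case/andP=> /eqP <- /forallP reach_i; apply/forallP => u.
  exact: connect_trans (reach_i u) (fconnect1 g i).
have [t gj_to_j] := fconnect_iterP _ _ _ (reach_j (g j)).
pose i0 := iter t g j.
have gi0 : g i0 = j by rewrite /i0 -iterS iterSr gj_to_j.
rewrite -[RHS]/1 -(card1 i0); apply: eq_card => i; rewrite !inE.
apply/andP/eqP => [[/eqP gi /forallP reach_i] | ->].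
  exact: fcycle_pred_unique gi gi0 (reach_i j) (fconnect_iter g t j).
split; first by rewrite gi0.
apply/forallP => u; exact: connect_trans (reach_j u) (fconnect_iter g t j).
Qed.

End FunctionalGraphs.

Local Open Scope ring_scope.

Section TreeWeights.
Variables (T : finType) (R : comNzRingType) (P : T -> T -> R).
Implicit Types (f g : {ffun T -> T}) (i j l r u : T).

Definition fweight g : R := \prod_u P u (g u).

Definition tree_weight r f : R := \prod_(u | u != r) P u (f u).

Definition tree_sum r : R := \sum_(f : {ffun T -> T} | arborescence r f) tree_weight r f.

Lemma fweight_redirect f i j : fweight (redirect f i j) = tree_weight i f * P i j.
Proof.
rewrite /fweight (bigD1 i) //= redirect_at mulrC; congr (_ * _).
by apply: eq_bigr => u ui; rewrite redirect_out.
Qed.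

Lemma sum_redirect_root i j :
  \sum_(f : {ffun T -> T} | arborescence i f) fweight (redirect f i j) =
  \sum_(g : {ffun T -> T} | (g i == j) && all_reach i g) fweight g.
Proof.
rewrite [RHS](reindex_onto (fun f => redirect f i j) (fun f => redirect f i i)) /=.
  apply: eq_bigl => f; rewrite redirect_at eqxx all_reach_arborescence !redirectK /=.
  by rewrite [LHS]arborescence_redirect_root.
by move=> g /andP[/eqP gi _]; rewrite redirectK -{1}gi redirect_id.
Qed.

Lemma sum_redirect_self j l :
  \sum_(f : {ffun T -> T} | arborescence j f) fweight (redirect f j l) =
  \sum_(g : {ffun T -> T} | all_reach j g && (g j == l)) fweight g.
Proof.
rewrite [RHS](reindex_onto (fun f => redirect f j l) (fun f => redirect f j j)) /=.
  apply: eq_bigl => f; rewrite all_reach_arborescence redirect_at eqxx !redirectK.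
  by rewrite [LHS]arborescence_redirect_root andbT.
by move=> g /andP[_ /eqP gj]; rewrite redirectK -{1}gj redirect_id.
Qed.

Lemma sum_reached_pred j :
  \sum_i \sum_(g : {ffun T -> T} | (g i == j) && all_reach i g) fweight g =
  \sum_(g : {ffun T -> T} | all_reach j g) fweight g.
Proof.
under eq_bigr do rewrite big_mkcond.
rewrite exchange_big [RHS]big_mkcond; apply: eq_bigr => g _.
rewrite -big_mkcond sumr_const.
by rewrite -[X in _ *+ X]/#|[pred i | (g i == j) && all_reach i g]| card_reached_pred;
  case: (all_reach j g).
Qed.

(* Markov chain tree theorem: both sides equal the total weight of the maps
   in which every vertex reaches [j]. *)
Lemma tree_sum_invariant j :
  (forall i, \sum_l P i l = 1) -> \sum_i tree_sum i * P i j = tree_sum j.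
Proof.
move=> P_sum1.
transitivity (\sum_(g : {ffun T -> T} | all_reach j g) fweight g).
  rewrite -sum_reached_pred; apply: eq_bigr => i _.
  rewrite -sum_redirect_root /tree_sum big_distrl /=.
  by apply: eq_bigr => f _; rewrite fweight_redirect.
rewrite (partition_big (fun g => g j) xpredT) //=.
under eq_bigr => l _ do rewrite -sum_redirect_self.
rewrite exchange_big /tree_sum; apply: eq_bigr => f _.
by rewrite -[RHS]mulr1 -(P_sum1 j) big_distrr; apply: eq_bigr => l _; rewrite fweight_redirect.
Qed.

End TreeWeights.

Local Close Scope ring_scope.

Section SpanningArborescence.
Variables (T : finType) (e : rel T) (r : T).
Implicit Types (f : {ffun T -> T}) (S : {set T}) (a b u : T).

Definition partial_arborescence S f : bool :=
  [&& f r == r, r \in S, [forall u in S, f u \in S],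
      [forall u in S, fconnect f u r] & [forall u in S, (u != r) ==> e u (f u)]].

Lemma connect_exit S x y :
  connect e x y -> x \notin S -> y \in S -> exists a b, [/\ a \notin S, b \in S & e a b].
Proof.
case/connectP => p; elim: p x => [|z p IHp] x /=; first by move=> _ -> /negP.
case/andP => exz pz last_y xS yS.
have [zS | zNS] := boolP (z \in S); first by exists x, z.
exact: IHp pz last_y zNS yS.
Qed.

Lemma partial_arborescence_grow S f a b :
  partial_arborescence S f -> a \notin S -> b \in S -> e a b ->
  partial_arborescence (a |: S) (redirect f a b).
Proof.
case/and5P => /eqP fr rS /forall_inP f_in /forall_inP to_r /forall_inP f_e aS bS eab.
have Nin_a x : x \in S -> x != a by apply: contraTneq => ->.
have iter_in u t : u \in S -> iter t f u \in S.
  by move=> uS; elim: t => //= t; apply: f_in.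
have to_r' u : u \in S -> fconnect (redirect f a b) u r.
  move=> uS; have /fconnect_iterP[t <-] := to_r u uS; apply/fconnect_iterP; exists t.
  by apply: (iter_agree (a := a)) => [x /redirect_out|s _] //; apply/Nin_a/iter_in.
apply/and5P; split; rewrite ?inE ?rS ?orbT //.
- by rewrite redirect_out ?fr ?Nin_a.
- apply/forall_inP => u; rewrite !inE => /predU1P[-> | uS].
    by rewrite redirect_at bS orbT.
  by rewrite redirect_out ?f_in ?orbT ?Nin_a.
- apply/forall_inP => u; rewrite !inE => /predU1P[-> | uS]; last exact: to_r'.
  by apply: connect_trans (fconnect1 _ a) _; rewrite redirect_at; apply: to_r'.
- apply/forall_inP => u; rewrite !inE => /predU1P[-> | uS].
    by rewrite redirect_at eab implybT.
  by rewrite redirect_out ?f_e ?Nin_a.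
Qed.

Lemma exists_arborescence :
  (forall u, connect e u r) ->
  exists2 f, arborescence r f & forall u, u != r -> e u (f u).
Proof.
move=> to_r.
pose extendable S := [exists f, partial_arborescence S f].
have extendable_r : extendable [set r].
  apply/existsP; exists [ffun=> r]; apply/and5P; split; rewrite ?ffunE ?inE //.
  - by apply/forall_inP => u _; rewrite ffunE inE.
  - by apply/forall_inP => u; rewrite inE => /eqP ->; apply: connect0.
  - by apply/forall_inP => u; rewrite inE => ->.
have [S /existsP[f partS] S_max] := arg_maxnP (fun S => #|S|) extendable_r.
have [/eqP S_full | /eqP S_part] := boolP (S == setT).
  move: partS; rewrite S_full => /and5P[fr _ _ /forall_inP to_r' /forall_inP f_e].
  exists f; first by rewrite /arborescence fr; apply/forallP => u; rewrite to_r' ?inE.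
  by move=> u uNr; have := f_e u (in_setT u); rewrite uNr.
have [x xNS] : exists x, x \notin S.
  apply/existsP; apply: contra_notT S_part; rewrite negb_exists => /forallP S_all.
  by apply/setP => u; rewrite inE; apply/negPn/S_all.
have rS : r \in S by case/and5P: partS.
have [a [b [aNS bS eab]]] := connect_exit (to_r x) xNS rS.
have /S_max : extendable (a |: S).
  by apply/existsP; exists (redirect f a b); apply: partial_arborescence_grow.
by rewrite cardsU1 aNS add1n => /(leq_trans (ltnSn _)); rewrite ltnn.
Qed.

End SpanningArborescence.

Local Open Scope ring_scope.

Section IrreducibleChain.
Variables (T : finType) (R : realFieldType) (P : T -> T -> R).
Hypothesis P_ge0 : forall i j, 0 <= P i j.
Hypothesis P_sum1 : forall i, \sum_j P i j = 1.
Hypothesis P_irr : forall i j, connect (fun i j => 0 < P i j) i j.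
Implicit Types (f : {ffun T -> T}) (i j r : T).

Lemma tree_weight_ge0 r f : 0 <= tree_weight P r f.
Proof. exact: prodr_ge0. Qed.

Lemma tree_sum_ge0 r : 0 <= tree_sum P r.
Proof. by apply: sumr_ge0 => f _; apply: tree_weight_ge0. Qed.

Lemma tree_sum_gt0 r : 0 < tree_sum P r.
Proof.
have [f arb_f f_pos] := exists_arborescence (fun u => P_irr u r).
rewrite /tree_sum (bigD1 f) //= ltr_pwDl ?prodr_gt0 //.
by apply: sumr_ge0 => g _; apply: tree_weight_ge0.
Qed.

(* Expanding a product of row sums, with the row of [r] replaced by the
   indicator of [r], enumerates the weights of all maps fixing [r]. *)
Lemma tree_sum_le1 r : tree_sum P r <= 1.
Proof.
pose Q u v := if u == r then (v == r)%:R else P u v.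
have Q_sum1 : \prod_u \sum_v Q u v = 1.
  apply: big1 => u _; rewrite /Q; case: eqP => // _.
  by rewrite (bigD1 r) //= eqxx big1 ?addr0 // => v /negPf ->.
have -> : tree_sum P r = \sum_(f | arborescence r f) \prod_u Q u (f u).
  apply: eq_bigr => f /andP[/eqP fr _].
  by rewrite [RHS](bigD1 r) //= /Q eqxx fr eqxx mul1r; apply: eq_bigr => u /negPf ->.
rewrite -[X in _ <= X]Q_sum1 bigA_distr_bigA [X in _ <= X](bigID (arborescence r)) /= lerDl.
by apply: sumr_ge0 => f _; apply: prodr_ge0 => u _; rewrite /Q; case: eqP.
Qed.

Lemma invariant_eq0 (x : T -> R) i j :
  (forall i, 0 <= x i) -> (forall j, \sum_i x i * P i j = x j) ->
  x j = 0 -> x i = 0.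
Proof.
move=> x_ge0 x_inv; have /connectP[p path_p ->] := P_irr i j.
elim: p i path_p => [//|k p IHp] i /= /andP[Pik path_p] /(IHp k path_p) xk.
have /psumr_eq0P xP0 : \sum_l x l * P l k = 0 by rewrite x_inv.
have /eqP := xP0 (fun l _ => mulr_ge0 (x_ge0 l) (P_ge0 l k)) i isT.
by rewrite mulf_eq0 (gt_eqF Pik) orbF => /eqP.
Qed.

(* Subtracting from [tree_sum P] the largest multiple of [p] below it leaves a
   nonnegative invariant vector vanishing somewhere, hence everywhere. *)
Lemma invariant_prob_tree_sum (p : T -> R) :
  (forall i, 0 <= p i) -> \sum_i p i = 1 -> (forall j, \sum_i p i * P i j = p j) ->
  forall i, tree_sum P i = (\sum_j tree_sum P j) * p i.
Proof.
move=> p_ge0 p_sum1 p_inv i.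
have p_gt0 j : 0 < p j.
  rewrite lt_def p_ge0 andbT; apply: contra_eqN p_sum1 => /eqP pj0.
  rewrite big1 => [|k _]; last exact: invariant_eq0 pj0.
  by rewrite eq_sym oner_eq0.
have [i0 _ i0_min] := arg_minP (fun j => tree_sum P j / p j) (isT : predT i).
set c := tree_sum P i0 / p i0 in i0_min.
pose x j := tree_sum P j - c * p j.
have x_ge0 j : 0 <= x j by rewrite subr_ge0 -ler_pdivlMr ?i0_min.
have x_inv j : \sum_k x k * P k j = x j.
  under eq_bigr do rewrite mulrBl -mulrA.
  by rewrite sumrB -mulr_sumr p_inv tree_sum_invariant.
have x_i0 : x i0 = 0 by rewrite /x /c divfK ?subrr ?gt_eqF.
have tree_sum_prop j : tree_sum P j = c * p j.
  by apply/eqP; rewrite -subr_eq0; apply/eqP; apply: invariant_eq0 x_ge0 x_inv x_i0.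
by rewrite (eq_bigr _ (fun j _ => tree_sum_prop j)) -mulr_sumr p_sum1 mulr1.
Qed.

End IrreducibleChain.

Lemma rat_mul_nat_int (x : rat) (s : nat) :
  (x * s%:R \is a Num.int) = (absz (denq x) %| s)%N.
Proof.
apply/idP/idP => [/intrP[y xs_y] | /dvdnP[q ->]].
  have num_den : numq x * s%:Z = y * denq x.
    apply: (@intr_inj rat); rewrite !intrM numqE -xs_y.
    by rewrite -mulrA [_%:~R * _]mulrC mulrA.
  have : (denq x %| numq x * s%:Z)%Z by rewrite num_den dvdz_mull ?dvdzz.
  by rewrite Gauss_dvdzr // coprimez_sym coprimezE coprime_num_den.
rewrite natrM [(absz (denq x))%:R]pmulrn absz_denq mulrC -mulrA.
by rewrite [_%:~R * x]mulrC -numqE rpredM ?intr_int ?natr_int.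
Qed.

Section IntegralTreeSums.
Variables (T : finType) (M : nat) (P : T -> T -> rat).
Hypothesis P_ge0 : forall i j, 0 <= P i j.
Hypothesis P_sum1 : forall i, \sum_j P i j = 1.
Hypothesis P_irr : forall i j, connect (fun i j => 0 < P i j) i j.
Hypothesis P_den : forall i j, (absz (denq (P i j)) %| M)%N.
Hypothesis M_gt0 : (0 < M)%N.
Implicit Types (f : {ffun T -> T}) (i j r u v : T).

Definition branching : {set T} :=
  [set i | (1 < #|[set j | (0 < P i j)%R]|)%N].

(* A state with a single successor moves there with probability 1. *)
Lemma nonbranching_int u v : u \notin branching -> P u v \is a Num.int.
Proof.
rewrite inE -leqNgt => /card_le1_eqP succ_u.
have [Puv_gt0 | Puv_le0] := ltP 0 (P u v); last first.
  by rewrite (@le_anti _ _ (P u v) 0) ?Puv_le0 ?P_ge0.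
have -> : P u v = 1.
  rewrite -(P_sum1 u) (bigD1 v) //= big1 ?addr0 // => j jNv.
  apply/eqP; rewrite eq_le P_ge0 andbT leNgt; apply: contra jNv => Puj_gt0.
  by apply/eqP/succ_u; rewrite inE.
exact: int_num1.
Qed.

Lemma tree_weight_int r f k :
  (#|branching :\ r| <= k)%N -> (M ^ k)%:R * tree_weight P r f \is a Num.int.
Proof.
move=> le_k; rewrite -(subnK le_k) expnD natrM -mulrA rpredM ?natr_int //.
have -> : (M ^ #|branching :\ r|)%:R =
          \prod_(u | u != r) (if u \in branching then M%:R else 1) :> rat.
  rewrite -big_mkcondr natrX prodr_const; congr (_ ^+ _).
  by apply: eq_card => u; rewrite [RHS]unfold_in !inE andbC.
rewrite -big_split rpred_prod //= => u _; case: ifP => [_ | uNb].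
  by rewrite mulrC rat_mul_nat_int.
by rewrite mul1r nonbranching_int ?uNb.
Qed.

Lemma card_branching_setD1 r :
  (#|branching :\ r| <= minn #|branching| #|T|.-1)%N.
Proof.
rewrite leq_min subset_leq_card ?subsetDl //= -(cardC1 r).
by apply/subset_leq_card/subsetP => u; rewrite !inE => /andP[].
Qed.

Lemma tree_sum_int r :
  (M ^ minn #|branching| #|T|.-1)%:R * tree_sum P r \is a Num.int.
Proof.
rewrite mulr_sumr rpred_sum // => f _.
exact/tree_weight_int/card_branching_setD1.
Qed.

(* [tree_sum P] is proportional to [p], and clearing the denominators of the
   tree sums by [M ^ m] also clears those of [p]. *)
Lemma invariant_prob_denominator (p : T -> rat) :
  (forall i, 0 <= p i) -> \sum_i p i = 1 -> (forall j, \sum_i p i * P i j = p j) ->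
  exists2 s : nat, (0 < s <= #|T| * M ^ minn #|branching| #|T|.-1)%N &
                   forall i, p i * s%:R \is a Num.int.
Proof.
move=> p_ge0 p_sum1 p_inv; set m := minn _ _.
set S := \sum_j tree_sum P j.
have [r _] : exists r : T, true.
  apply/existsP; apply: contra_eqT p_sum1; rewrite negb_exists => /forallP T0.
  by rewrite big_pred0 // => x; apply/negbTE/T0.
have Mm_gt0 : 0 < (M ^ m)%:R :> rat by rewrite ltr0n expn_gt0 M_gt0.
have S_gt0 : 0 < S.
  rewrite /S (bigD1 r) //= ltr_pwDl ?tree_sum_gt0 // sumr_ge0 // => j _.
  exact: tree_sum_ge0.
have /natrP[s s_def] : (M ^ m)%:R * S \is a Num.nat.
  by rewrite natrEint mulr_ge0 ?ltW // andbT mulr_sumr rpred_sum // => j _; apply: tree_sum_int.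
exists s.
  apply/andP; split; first by rewrite -(ltr_nat rat) -s_def mulr_gt0.
  rewrite -(ler_nat rat) -s_def natrM mulrC ler_wpM2r ?ler0n //.
  by rewrite -sum1_card natr_sum ler_sum // => j _; apply: tree_sum_le1.
move=> i; rewrite -s_def mulrC -mulrA -invariant_prob_tree_sum //.
  exact: tree_sum_int.
Qed.

End IntegralTreeSums.

Theorem mainTheorem8 (n M : nat) (P : 'M[rat]_n) (pi : 'rV[rat]_n) :
  (0 < M)%N -> stochastic P -> irreducible P -> denoms_divide P M ->
  invariant_prob P pi ->
  (lcd pi <= n * M ^ minn (branching_states P) n.-1)%N.
Proof.
move=> M_gt0 [P_ge0 P_sum1] P_irr P_den [pi_ge0 [pi_sum1 pi_inv]].
have pi_invj j : \sum_i pi 0 i * P i j = pi 0 j.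
  by have := congr1 (fun v : 'rV_n => v 0 j) pi_inv; rewrite mxE.
have [s /andP[s_gt0 s_le] pi_s] :=
  invariant_prob_denominator P_ge0 P_sum1 P_irr P_den M_gt0 pi_ge0 pi_sum1 pi_invj.
have lcd_dvd_s : (lcd pi %| s)%N.
  by apply/dvdn_biglcmP => i _; rewrite -rat_mul_nat_int.
by apply: leq_trans (dvdn_leq s_gt0 lcd_dvd_s) _; rewrite card_ord in s_le.
Qed.
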